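(* Let $(X,\phi)$ be an acyclic convex geometry. Then $(X,\phi)$ is ranked if and only if its critical base is ranked.
   Context: All sets are finite. A closure operator $\phi$ on $X$ is extensive, monotone and idempotent on $2^X$. $(X,\phi)$ is standard if $\phi(\emptyset)=\emptyset$ and $\phi(\{x\})\setminus\{x\}$ is closed for each $x$. A unit implicational base $\Sigma$ (set of implications $A\to b$, $A\subseteq X$, $b\in X$) is an implicational base of $(X,\phi)$ if its closed sets (sets $S$ such that for each $A\to b\in\Sigma$, $A\not\subseteq S$ or $b\in S$) are exactly the closed sets of $\phi$. $\Sigma$ is acyclic if the directed graph on $X$ with arcs $x\to y$ whenever some $A\to y\in\Sigma$ has $x\in A$ has no directed cycle; irredundant if removing any implication changes the closed sets. An acyclic convex geometry is a standard closure space admitting an acyclic implicational base. $A$ is a minimal generator of $b$ if $b\in\phi(A)$ and $b\notin\phi(A\setminus\{x\})$ for all $x\in A$. An acyclic convex geometry admits a unique irredundant implicational base all of whose implications $A\to b$ have $A$ a minimal generator of $b$; it is called the critical base. A rank function on $\Sigma$ is a map $\rho:X\to\mathbb{N}$ such that $\rho(a)=\rho(b)+1$ whenever $A\to b\in\Sigma$ and $a\in A$; $\Sigma$ is ranked if it admits a rank function. A convex geometry is ranked if it admits a ranked implicational base. *)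

From mathcomp Require Import all_boot.
Set Implicit Arguments. Unset Strict Implicit. Unset Printing Implicit Defensive.

Section ConvexGeometry.
Variable X : finType.

Definition implication := ({set X} * X)%type.

Definition closure_operator (phi : {set X} -> {set X}) : Prop :=
  [/\ (forall A : {set X}, A \subset phi A),
      (forall A B : {set X}, A \subset B -> phi A \subset phi B) &
      (forall A : {set X}, phi (phi A) = phi A)].

Definition phi_closed (phi : {set X} -> {set X}) (S : {set X}) : Prop :=
  phi S = S.

Definition standard (phi : {set X} -> {set X}) : Prop :=
  phi set0 = set0 /\ forall x : X, phi_closed phi (phi [set x] :\ x).

Definition sigma_closed (Sigma : {set implication}) (S : {set X}) : Prop :=
  forall A b, (A, b) \in Sigma -> ~~ (A \subset S) \/ b \in S.

Definition implicational_base (phi : {set X} -> {set X})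
  (Sigma : {set implication}) : Prop :=
  forall S : {set X}, sigma_closed Sigma S <-> phi_closed phi S.

Definition sigma_arc (Sigma : {set implication}) : rel X :=
  fun x y => [exists A : {set X}, ((A, y) \in Sigma) && (x \in A)].

(* no directed cycle (self-loops included) *)
Definition acyclic (Sigma : {set implication}) : Prop :=
  ~ exists x y : X, sigma_arc Sigma x y /\ connect (sigma_arc Sigma) y x.

Definition irredundant (Sigma : {set implication}) : Prop :=
  forall i, i \in Sigma ->
    exists S : {set X}, ~ (sigma_closed (Sigma :\ i) S <-> sigma_closed Sigma S).

Definition acyclic_convex_geometry (phi : {set X} -> {set X}) : Prop :=
  [/\ closure_operator phi, standard phi &
      exists Sigma, implicational_base phi Sigma /\ acyclic Sigma].

Definition minimal_generator (phi : {set X} -> {set X}) (A : {set X}) (b : X)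
  : Prop :=
  b \in phi A /\ forall x, x \in A -> b \notin phi (A :\ x).

(* The critical base: the (unique) irredundant implicational base all of
   whose premises are minimal generators of their conclusions. *)
Definition critical_base (phi : {set X} -> {set X})
  (Sigma : {set implication}) : Prop :=
  [/\ implicational_base phi Sigma, irredundant Sigma &
      forall A b, (A, b) \in Sigma -> minimal_generator phi A b].

Definition rank_function (Sigma : {set implication}) (rho : X -> nat) : Prop :=
  forall A b a, (A, b) \in Sigma -> a \in A -> rho a = (rho b + 1)%N.

Definition ranked_base (Sigma : {set implication}) : Prop :=
  exists rho, rank_function Sigma rho.

Definition ranked_geometry (phi : {set X} -> {set X}) : Prop :=
  exists Sigma, implicational_base phi Sigma /\ ranked_base Sigma.

End ConvexGeometry.

(* Minimality of the critical premises forces them to lie strictly above their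
   conclusion in the rank of any ranked base T, since a closure never needs
   elements of rank at most that of the element it produces.  If a premise a of
   (A, b) had rank at least rank b + 2, take a set S witnessing the irredundance
   of (A, b) and a T-rule (B, b) with B inside the closure of A.  Then B lies in
   S, the closure of B contains nothing of rank above rank b + 1, hence misses a,
   so S meets the closure of B in a closed set containing B but not b. *)
From mathcomp Require Import all_boot.
From Stdlib Require Import Classical.
Set Implicit Arguments. Unset Strict Implicit. Unset Printing Implicit Defensive.

Definition descending (X : finType) (Sigma : {set implication X}) (rho : X -> nat) :=
  forall A b a, (A, b) \in Sigma -> a \in A -> rho b < rho a.

Lemma rank_function_descending (X : finType) (Sigma : {set implication X}) rho :
  rank_function Sigma rho -> descending Sigma rho.
Proof. by move=> rhoS A b a Ab aA; rewrite (rhoS _ _ _ Ab aA) addn1. Qed.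

Section BaseClosure.
Variables (X : finType) (phi : {set X} -> {set X}) (Sigma : {set implication X}).
Hypothesis phi_ext : forall A : {set X}, A \subset phi A.
Hypothesis phi_mono : forall A B : {set X}, A \subset B -> phi A \subset phi B.
Hypothesis phi_idem : forall A : {set X}, phi (phi A) = phi A.
Hypothesis Sigma_base : implicational_base phi Sigma.

Lemma closure_rule (S B : {set X}) c : (B, c) \in Sigma -> B \subset phi S -> c \in phi S.
Proof.
move=> Bc BS; have [/negP //|//] := (Sigma_base (phi S)).2 (phi_idem S) B c Bc.
Qed.

Lemma closure_min (A Y : {set X}) :
  A \subset Y -> sigma_closed Sigma Y -> phi A \subset Y.
Proof. by move=> AY /Sigma_base <-; apply: phi_mono. Qed.

Lemma closure_rule_witness (S : {set X}) x : x \in phi S -> x \notin S ->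
  exists2 B, (B, x) \in Sigma & B \subset phi S.
Proof.
move=> xS xNS; apply: NNPP => noB.
have closed_D : sigma_closed Sigma (phi S :\ x).
  move=> B c Bc; have [BD|] := boolP (B \subset phi S :\ x); last by left.
  have BS : B \subset phi S by apply: subset_trans BD (subsetDl _ _).
  right; rewrite !inE (closure_rule Bc BS) andbT.
  by apply/eqP => cx; apply: noB; exists B; rewrite -?cx.
have SD : S \subset phi S :\ x.
  by apply/subsetP => y yS; rewrite !inE (subsetP (phi_ext S)) // andbT;
     apply: contraNneq xNS => <-.
by have := subsetP (closure_min SD closed_D) x xS; rewrite !inE eqxx.
Qed.

Variable rho : X -> nat.
Hypothesis rho_desc : descending Sigma rho.

Lemma mem_closure_rank_geq k (S : {set X}) x : x \in phi S -> k <= rho x ->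
  x \in phi (S :&: [set y | k <= rho y]).
Proof.
move=> xS kx; set S' := S :&: _.
(* Rules only lower the rank, so adding every element of rank below k keeps closedness. *)
have closed_Z : sigma_closed Sigma (phi S' :|: [set y | rho y < k]).
  move=> B c Bc; have [BZ|] := boolP (B \subset _); last by left.
  right; rewrite !inE; have [_|kc] := ltnP (rho c) k; rewrite ?orbT // orbF.
  apply: (closure_rule Bc); apply/subsetP => y yB.
  move: (subsetP BZ y yB); rewrite !inE ltnNge.
  by rewrite (leq_trans kc (ltnW (rho_desc Bc yB))) orbF.
have SZ : S \subset phi S' :|: [set y | rho y < k].
  apply/subsetP => y yS; rewrite !inE; have [_|ky] := ltnP (rho y) k; rewrite ?orbT //.
  by rewrite (subsetP (phi_ext S')) // !inE yS ky.
by have := subsetP (closure_min SZ closed_Z) x xS; rewrite !inE ltnNge kx orbF.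
Qed.

Lemma mem_closure_rank_gt (S : {set X}) x : x \in phi S -> x \notin S ->
  x \in phi (S :&: [set y | rho x < rho y]).
Proof.
move=> xS xNS; have [B Bx BS] := closure_rule_witness xS xNS.
apply: (closure_rule Bx); apply/subsetP => y yB.
exact: mem_closure_rank_geq (subsetP BS y yB) (rho_desc Bx yB).
Qed.

Hypothesis phi0 : phi set0 = set0.

Lemma closure_rank_lt k (B : {set X}) : {in B, forall y, rho y < k} ->
  {in phi B, forall x, rho x < k}.
Proof.
move=> Bk x xB; rewrite ltnNge; apply/negP => kx.
have := mem_closure_rank_geq xB kx.
suff -> : B :&: [set y | k <= rho y] = set0 by rewrite phi0 inE.
by apply/setP => y; rewrite !inE; apply/andP => -[/Bk]; rewrite ltnNge => /negP.
Qed.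

End BaseClosure.

Section Irredundant.
Variables (X : finType) (Sigma : {set implication X}).

Lemma irredundant_witness (A : {set X}) b : irredundant Sigma -> (A, b) \in Sigma ->
  exists S, [/\ sigma_closed (Sigma :\ (A, b)) S, A \subset S & b \notin S].
Proof.
move=> irr Ab; have [S notiff] := irr _ Ab; exists S.
have closed_del : sigma_closed (Sigma :\ (A, b)) S.
  apply: NNPP => notD; apply: notiff; split=> // closed_S A' b'.
  by rewrite inE => /andP[_]; apply: closed_S.
have not_closed : ~ sigma_closed Sigma S by move=> closed_S; apply: notiff; split=> _.
have /andP[AS bNS] : (A \subset S) && (b \notin S).
  apply/negPn/negP; rewrite negb_and negbK => /orP violated.
  apply: not_closed => A' b' A'b'.
  have [[-> ->] //|ne] := eqVneq (A', b') (A, b).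
  by apply: closed_del; rewrite !inE ne.
by split.
Qed.

Lemma irredundant_notin_premise (A : {set X}) b : irredundant Sigma -> (A, b) \in Sigma ->
  b \notin A.
Proof.
move=> irr Ab; have [S [_ AS bNS]] := irredundant_witness irr Ab.
exact: contraNN (subsetP AS b) bNS.
Qed.

Lemma sigma_closedI_del (A : {set X}) b (S F : {set X}) :
  sigma_closed (Sigma :\ (A, b)) S -> sigma_closed Sigma F -> ~~ (A \subset F) ->
  sigma_closed Sigma (S :&: F).
Proof.
move=> closed_S closed_F AF C d Cd.
have [|] := boolP (C \subset S :&: F); last by left.
rewrite subsetI => /andP[CS CF]; right.
have ne : (C, d) != (A, b) by apply: contraNneq AF => -[<- _].
have := closed_S C d; rewrite !inE ne Cd => /(_ isT) [/negP //|dS].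
have [/negP //|dF] := closed_F C d Cd.
by rewrite dS dF.
Qed.

Lemma sigma_closedU_rank_le rho (A : {set X}) b (S : {set X}) : descending Sigma rho ->
  sigma_closed (Sigma :\ (A, b)) S ->
  sigma_closed Sigma (S :|: [set y | rho y <= rho b]).
Proof.
move=> desc closed_S C d Cd; have [CY|] := boolP (C \subset _); last by left.
right; rewrite !inE; have [_|bd] := leqP (rho d) (rho b); rewrite ?orbT // orbF.
have CS : C \subset S.
  apply/subsetP => c cC; move: (subsetP CY c cC); rewrite !inE.
  by rewrite leqNgt (ltn_trans bd (desc _ _ _ Cd cC)) orbF.
have ne : (C, d) != (A, b) by apply: contraTneq bd => -[_ ->]; rewrite ltnn.
by have := closed_S C d; rewrite !inE ne Cd => /(_ isT) [/negP //|].
Qed.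

End Irredundant.

Section Critical.
Variables (X : finType) (phi : {set X} -> {set X}).
Hypothesis phi_ext : forall A : {set X}, A \subset phi A.
Hypothesis phi_mono : forall A B : {set X}, A \subset B -> phi A \subset phi B.
Hypothesis phi_idem : forall A : {set X}, phi (phi A) = phi A.
Hypothesis phi0 : phi set0 = set0.
Variables (Sigma T : {set implication X}) (rho : X -> nat).
Hypothesis Sigma_critical : critical_base phi Sigma.
Hypothesis T_base : implicational_base phi T.
Hypothesis rho_rank : rank_function T rho.

Let rho_desc := rank_function_descending rho_rank.

Lemma critical_descending : descending Sigma rho.
Proof.
case: Sigma_critical => _ irr min_gen A b a Ab aA.
have [bA minA] := min_gen A b Ab; rewrite ltnNge; apply/negP => ab.
have b_above := mem_closure_rank_gt phi_ext phi_mono phi_idem T_base rho_desc bA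
  (irredundant_notin_premise irr Ab).
apply: (negP (minA a aA)); apply: subsetP b_above; apply: phi_mono.
apply/subsetP => y; rewrite !inE => /andP[yA by_].
by rewrite yA andbT; apply: contraTneq by_ => ->; rewrite -leqNgt.
Qed.

Lemma critical_rank_function : rank_function Sigma rho.
Proof.
case: Sigma_critical => Sigma_base irr min_gen A b a Ab aA.
have ba := critical_descending Ab aA.
have [->|ne] := eqVneq (rho a) (rho b).+1; first by rewrite addn1.
have b2a : (rho b).+2 <= rho a by rewrite ltn_neqAle eq_sym ne ba.
have [S [closed_S AS bNS]] := irredundant_witness irr Ab.
have [bA _] := min_gen A b Ab.
have [B Bb BA] := closure_rule_witness phi_ext phi_mono phi_idem T_base bA
  (irredundant_notin_premise irr Ab).
have BS : B \subset S.
  have AY := closure_min phi_mono Sigma_base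
    (subset_trans AS (subsetUl _ _)) (sigma_closedU_rank_le critical_descending closed_S).
  apply/subsetP => y yB; move: (subsetP AY y (subsetP BA y yB)).
  by rewrite !inE (rho_rank Bb yB) addn1 ltnn orbF.
have aNB : a \notin phi B.
  apply: contraTN b2a => aB; rewrite -ltnNge.
  by apply: (closure_rank_lt phi_ext phi_mono phi_idem T_base rho_desc phi0 _ aB)
    => y yB; rewrite (rho_rank Bb yB) addn1.
have closed_SB : sigma_closed Sigma (S :&: phi B).
  apply: sigma_closedI_del closed_S _ _; first exact/Sigma_base/phi_idem.
  by apply: contraNN aNB => /subsetP; apply.
have BSB : B \subset S :&: phi B by rewrite subsetI BS phi_ext.
have bB : b \in phi B := closure_rule phi_idem T_base Bb (phi_ext B).
have := subsetP (closure_min phi_mono Sigma_base BSB closed_SB) b bB.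
by rewrite inE (negbTE bNS).
Qed.

End Critical.

Theorem theorem2 (X : finType) (phi : {set X} -> {set X})
  (Hacg : acyclic_convex_geometry phi)
  (Sigma : {set implication X}) (Hcrit : critical_base phi Sigma) :
  ranked_geometry phi <-> ranked_base Sigma.
Proof.
case: Hacg => [[phi_ext phi_mono phi_idem] [phi0 _] _].
split=> [[T [T_base [rho rho_rank]]]|Sigma_ranked].
- by exists rho; apply: critical_rank_function T_base rho_rank.
- by exists Sigma; case: Hcrit.
Qed.
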